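(* Let $A\in\mathbb{R}^{n\times n}$ be symmetric positive-semidefinite, $b\in\mathbb{R}^n$, $\alpha\in\mathbb{R}$, $g:\mathbb{R}^n\to(-\infty,\infty]$ proper, lower semicontinuous and convex, and $\gamma>0$ such that $I-\gamma A$ is positive-definite. Set $Q:=(I-\gamma A)^{-1}$, $c:=\gamma Qb$, $P:=Q-I$, $\psi(u):=\frac12\langle Pu,u\rangle+\langle c,u\rangle+\gamma e_\gamma g(u)$ and $\varphi(x):=\frac12\langle Ax,x\rangle+\langle b,x\rangle+\alpha+g(x)$. Then the following are equivalent for $\bar x\in\mathbb{R}^n$: (i) $\bar x$ is an optimal solution of minimizing $\varphi$ over $\mathbb{R}^n$; (ii) $\bar x=Q\bar u+c$ for some optimal solution $\bar u$ of minimizing $\psi$ over $\mathbb{R}^n$.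
   Context: Moreau envelope: $e_\gamma g(x):=\inf_y\{g(y)+\frac1{2\gamma}\|y-x\|^2\}$. *)

From HB Require Import structures.
From mathcomp Require Import all_boot all_order all_algebra.
From mathcomp Require Import all_classical all_reals all_analysis.
Set Implicit Arguments. Unset Strict Implicit. Unset Printing Implicit Defensive.
Import Order.TTheory GRing.Theory Num.Theory.
Import numFieldNormedType.Exports.
Local Open Scope classical_set_scope.
Local Open Scope ring_scope.

Definition dotv {R : realType} {n : nat} (u v : 'cV[R]_n) : R := (u^T *m v) 0 0.

Definition symmetricmx {R : realType} {n : nat} (A : 'M[R]_n) : Prop := A^T = A.

Definition psdmx {R : realType} {n : nat} (A : 'M[R]_n) : Prop :=
  symmetricmx A /\ forall x : 'cV[R]_n, 0 <= dotv (A *m x) x.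

Definition pdmx {R : realType} {n : nat} (A : 'M[R]_n) : Prop :=
  symmetricmx A /\ forall x : 'cV[R]_n, x != 0 -> 0 < dotv (A *m x) x.

Definition proper_fun {R : realType} {n : nat} (g : 'cV[R]_n -> \bar R) : Prop :=
  (forall x, g x != -oo%E) /\ exists x, g x != +oo%E.

(* convex extended-real valued function (with no -oo values, + is unambiguous) *)
Definition convex_efun {R : realType} {n : nat} (g : 'cV[R]_n -> \bar R) : Prop :=
  forall (x y : 'cV[R]_n) (t : R), 0 <= t <= 1 ->
    (g ((t *: x + (1 - t) *: y)%R) <= t%:E * g x + (1 - t)%:E * g y)%E.

Definition moreau_env {R : realType} {n : nat} (gamma : R) (g : 'cV[R]_n -> \bar R)
  (x : 'cV[R]_n) : \bar R :=
  ereal_inf [set (g y + ((2 * gamma)^-1 * dotv (y - x) (y - x))%:E)%E | y in [set: 'cV[R]_n]]%classic.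

Definition is_minimizer {R : realType} {n : nat} (f : 'cV[R]_n -> \bar R) (xbar : 'cV[R]_n) : Prop :=
  forall x, (f xbar <= f x)%E.

From HB Require Import structures.
From mathcomp Require Import all_boot all_order all_algebra.
From mathcomp Require Import all_classical all_reals all_analysis.
From mathcomp Require Import ring lra.
Set Implicit Arguments. Unset Strict Implicit. Unset Printing Implicit Defensive.
Import Order.TTheory GRing.Theory Num.Theory.
Import numFieldNormedType.Exports.
Local Open Scope classical_set_scope.
Local Open Scope ring_scope.

(* Put M := I - gamma A, so that Q = M^-1, and x := Q u + c; u |-> x is an affine
   bijection with inverse x |-> M (x - c).  Completing the square gives, for all u, y,
     <P u, u>/2 + <c, u> + |y - u|^2/2 + gamma g(y)
       = <M (x - y), x - y>/2 + gamma phi(y) + K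
   with K independent of u and y.  Taking the infimum over y,
     psi(u) = K + inf_y (gamma phi(y) + <M (x - y), x - y>/2),
   i.e. up to the change of variables psi is the Moreau envelope of gamma phi in the
   metric of the positive definite M.  An envelope has the same infimum as the
   function, which gives (i) => (ii).  For (ii) => (i), if phi(x1) < phi(x) then
   lower semicontinuity keeps phi above phi(x1) on a ball around x, while outside
   the ball the M-distance term is bounded below, so the envelope at x would exceed
   its own value.  Convexity of g only serves to make e_gamma g finite, through an
   affine lower bound on g. *)

Section InnerProduct.
Variables (R : realType) (n : nat).
Implicit Types (u v w : 'cV[R]_n) (B : 'M[R]_n).

Lemma dotvE u v : dotv u v = \sum_i u i 0 * v i 0.
Proof. by rewrite /dotv mxE; apply: eq_bigr => i _; rewrite mxE. Qed.

Lemma dotvC u v : dotv u v = dotv v u.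
Proof. by rewrite !dotvE; apply: eq_bigr => i _; rewrite mulrC. Qed.

Lemma dotvDl u v w : dotv (u + v) w = dotv u w + dotv v w.
Proof. by rewrite /dotv linearD /= mulmxDl mxE. Qed.

Lemma dotvDr u v w : dotv w (u + v) = dotv w u + dotv w v.
Proof. by rewrite /dotv mulmxDr mxE. Qed.

Lemma dotvZl a u v : dotv (a *: u) v = a * dotv u v.
Proof. by rewrite /dotv linearZ /= -scalemxAl mxE. Qed.

Lemma dotvZr a u v : dotv u (a *: v) = a * dotv u v.
Proof. by rewrite /dotv -scalemxAr mxE. Qed.

Lemma dotvBl u v w : dotv (u - v) w = dotv u w - dotv v w.
Proof. by rewrite dotvDl -scaleN1r dotvZl mulN1r. Qed.

Lemma dotvBr u v w : dotv w (u - v) = dotv w u - dotv w v.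
Proof. by rewrite dotvDr -scaleN1r dotvZr mulN1r. Qed.

Lemma dotv0l v : dotv 0 v = 0.
Proof. by rewrite -(scale0r 0) dotvZl mul0r. Qed.

Lemma dotv_mulmxl B u v : dotv (B *m u) v = dotv u (B^T *m v).
Proof. by rewrite /dotv trmx_mul mulmxA. Qed.

Lemma dotv_delta u (i : 'I_n) : dotv u (delta_mx i 0) = u i 0.
Proof.
rewrite dotvE (bigD1 i) //= mxE !eqxx mulr1 big1 ?addr0 // => j ji.
by rewrite mxE (negbTE ji) mulr0.
Qed.

Lemma normr_coord_le u (i : 'I_n) : `|u i 0| <= `|u|.
Proof.
rewrite [leRHS]/Num.Def.normr /= mx_normrE.
by apply: le_trans (le_bigmax _ _ (i, 0)) => /=.
Qed.

Lemma normr_dotv_le u v : `|dotv u v| <= (\sum_i `|u i 0|) * `|v|.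
Proof.
rewrite dotvE mulr_suml; apply: le_trans (ler_norm_sum _ _ _) _.
by apply: ler_sum => i _; rewrite normrM ler_wpM2l ?normr_coord_le.
Qed.

Lemma sqr_normr_le u e : 0 <= e -> (forall i, u i 0 ^+ 2 <= e) -> `|u| ^+ 2 <= e.
Proof.
move=> e_ge0 ue; have [->|/mx_norm_neq0 [[i j] /= ui]] := eqVneq (`|u| : R) 0.
  by rewrite expr0n.
change (mx_norm u ^+ 2 <= e).
by rewrite ui (ord1 j) real_normK ?num_real.
Qed.

Lemma sqr_normr_le_dotv u : `|u| ^+ 2 <= dotv u u.
Proof.
have coord_sqr_ge0 (k : 'I_n) : 0 <= u k 0 * u k 0 by rewrite -expr2 sqr_ge0.
apply: sqr_normr_le => [|i]; first by rewrite dotvE sumr_ge0.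
by rewrite dotvE (bigD1 i) //= expr2 lerDl sumr_ge0.
Qed.

End InnerProduct.

Section PositiveMatrices.
Variables (R : realType) (n : nat).
Implicit Types (b u v x y : 'cV[R]_n) (A B : 'M[R]_n).

Lemma pdmx_psd B : pdmx B -> psdmx B.
Proof.
move=> [B_sym B_pos]; split=> // x; have [->|/B_pos/ltW//] := eqVneq x 0.
by rewrite mulmx0 dotv0l.
Qed.

Lemma pdmx_unit B : pdmx B -> B \in unitmx.
Proof.
move=> [B_sym B_pos]; rewrite -row_free_unit -kermx_eq0.
apply/eqP/row_matrixP => i; rewrite row0; set r := row i _.
have /sub_kermxP r_ker : (r <= kermx B)%MS by apply: row_sub.
have Br : B *m r^T = 0 by rewrite -{1}B_sym -trmx_mul r_ker trmx0.
have [/(congr1 trmx)|/B_pos] := eqVneq r^T 0; first by rewrite trmxK trmx0.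
by rewrite Br dotv0l ltxx.
Qed.

(* The discriminant of t |-> <B (u - t v), u - t v> >= 0 is nonpositive. *)
Lemma psd_cauchy_schwarz B u v : psdmx B ->
  dotv (B *m u) v ^+ 2 <= dotv (B *m u) u * dotv (B *m v) v.
Proof.
move=> [B_sym B_psd].
set a := dotv (B *m u) u; set p := dotv (B *m u) v; set q := dotv (B *m v) v.
have quad_ge0 t : 0 <= a - 2 * t * p + t ^+ 2 * q.
  have := B_psd (u - t *: v).
  rewrite mulmxBr -scalemxAr dotvBl !dotvBr !dotvZl !dotvZr.
  have -> : dotv (B *m v) u = p by rewrite dotv_mulmxl B_sym dotvC.
  by rewrite -/a -/p -/q => h; nra.
have q_ge0 : 0 <= q by apply: B_psd.
have [q_gt0|q_le0] := ltrP 0 q.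
  have := quad_ge0 (p / q); have pq : p / q * q = p by rewrite mulfVK ?gt_eqF.
  set t := p / q in pq *; rewrite expr2 => h; nra.
have q0 : q = 0 by apply/eqP; rewrite eq_le q_le0 q_ge0.
rewrite q0 mulr0; have [->|p_neq0] := eqVneq p 0; first by rewrite expr0n.
have := quad_ge0 ((a + 1) / (2 * p)); rewrite q0 mulr0 addr0.
have -> : 2 * ((a + 1) / (2 * p)) * p = a + 1 by field; rewrite p_neq0.
lra.
Qed.

Lemma pdmx_sqr_normr_le B : pdmx B ->
  exists2 S, 0 < S & forall x, `|x| ^+ 2 <= S * dotv (B *m x) x.
Proof.
move=> B_pd; have B_psd := pdmx_psd B_pd.
(* x_i = <B x, B^-1 e_i>; bound it by Cauchy-Schwarz for the form of B. *)
pose w (i : 'I_n) : 'cV[R]_n := invmx B *m delta_mx i 0.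
pose D (i : 'I_n) := dotv (B *m w i) (w i).
have D_ge0 i : 0 <= D i by apply: B_psd.2.
exists (1 + \sum_i D i) => [|x]; first by rewrite ltr_wpDr ?sumr_ge0.
apply: sqr_normr_le => [|i]; first by rewrite mulr_ge0 ?B_psd.2 ?addr_ge0 ?sumr_ge0.
have -> : x i 0 = dotv (B *m x) (w i).
  by rewrite dotv_mulmxl B_psd.1 mulmxA mulmxV ?pdmx_unit // mul1mx dotv_delta.
apply: le_trans (psd_cauchy_schwarz _ _ B_psd) _.
rewrite mulrC ler_wpM2r ?B_psd.2 //.
by rewrite (bigD1 i) //= addrCA lerDl addr_ge0 ?sumr_ge0.
Qed.

Lemma psd_quad_tangent_le A b x y : psdmx A ->
  2^-1 * dotv (A *m x) x + dotv b x + dotv (A *m x + b) (y - x) <=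
  2^-1 * dotv (A *m y) y + dotv b y.
Proof.
move=> [A_sym A_psd]; have [w ->] : exists w, y = x + w.
  by exists (y - x); rewrite addrC subrK.
rewrite [x + w - x]addrC addKr mulmxDr !dotvDl !dotvDr.
rewrite [dotv (A *m w) x]dotv_mulmxl A_sym (dotvC w).
have := A_psd w; lra.
Qed.

End PositiveMatrices.

Lemma ltEFin_between (R : realType) (x : R) (e : \bar R) : (x%:E < e)%E ->
  exists2 a : R, x < a & (a%:E < e)%E.
Proof.
case: e => [r| |] //; last by exists (x + 1); rewrite ?ltey // ltrDl.
by rewrite lte_fin => xr; exists ((x + r) / 2); rewrite ?lte_fin; lra.
Qed.

Section ConvexMinorant.
Variables (R : realType) (n : nat) (g : 'cV[R]_n -> \bar R).
Hypothesis g_convex : convex_efun g.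
Hypothesis g_lsc : lower_semicontinuous g.

(* Lower semicontinuity keeps g above g x0 - 1 on a ball of radius r around x0;
   convexity along the segment from x0 to y propagates this bound to y. *)
Lemma convex_lsc_minorant x0 (G0 : R) : g x0 = G0%:E ->
  exists2 r : R, 0 < r & forall y, ((G0 - 1 - `|y - x0| / r)%:E <= g y)%E.
Proof.
move=> gx0; have : ((G0 - 1)%:E < g x0)%E by rewrite gx0 lte_fin ltrBlDr ltrDl.
move=> /g_lsc [V /nbhs_ballP [r /= r_gt0 ballV] g_gtV]; exists r => // y.
set d := `|y - x0|; have d_ge0 : 0 <= d by apply: normr_ge0.
set t := r / (r + d); have rd_gt0 : 0 < r + d by lra.
have t_gt0 : 0 < t by rewrite divr_gt0.
have t_le1 : t <= 1 by rewrite ler_pdivrMr // mul1r lerDl.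
have td_lt : t * d < r.
  rewrite /t mulrAC ltr_pdivrMr //; nra.
have g_gt : ((G0 - 1)%:E < g (t *: y + (1 - t) *: x0))%E.
  apply/g_gtV/ballV; rewrite -ball_normE /= /ball_ /=.
  have -> : x0 - (t *: y + (1 - t) *: x0) = - (t *: (y - x0)).
    by rewrite scalerBl scale1r addrCA -scalerBr opprD addNKr.
  by rewrite normrN normrZ gtr0_norm.
have := lt_le_trans g_gt (g_convex y x0 _); rewrite (ltW t_gt0) t_le1 gx0 => /(_ isT).
case: (g y) => [Gy| |]; last 2 first.
- by rewrite leey.
- by rewrite mulrNy gtr0_sg // mul1e addNye ltNge leNye.
rewrite -!EFinM -EFinD !lte_fin => lt_G; rewrite lee_fin.
have -> : G0 - 1 - d / r = G0 - t^-1 by rewrite /t invf_div; field; rewrite gt_eqF.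
rewrite -(ler_pM2l t_gt0) mulrBr mulfV ?gt_eqF //; lra.
Qed.

End ConvexMinorant.

Section MoreauEnvelope.
Variables (R : realType) (n : nat) (g : 'cV[R]_n -> \bar R) (gamma : R).
Hypothesis gamma_gt0 : 0 < gamma.
Hypothesis g_proper : proper_fun g.
Hypothesis g_convex : convex_efun g.
Hypothesis g_lsc : lower_semicontinuous g.
Implicit Types (u x y : 'cV[R]_n).

Lemma moreau_env_le u y :
  (gamma%:E * moreau_env gamma g u <=
   (2^-1 * dotv (y - u) (y - u))%:E + gamma%:E * g y)%E.
Proof.
have env_le : (moreau_env gamma g u <=
               g y + ((2 * gamma)^-1 * dotv (y - u) (y - u))%:E)%E.
  by apply: ereal_inf_lbound; exists y.
apply: le_trans (lee_wpmul2l _ env_le) _; first by rewrite lee_fin ltW.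
rewrite muleDr ?fin_num_adde_defl // -EFinM addeC.
by rewrite mulrA invfM mulrCA mulfV ?gt_eqF // mulr1.
Qed.

Lemma moreau_env_ge u (m : R) :
  (forall y, (m%:E <= (2^-1 * dotv (y - u) (y - u))%:E + gamma%:E * g y)%E) ->
  (m%:E <= gamma%:E * moreau_env gamma g u)%E.
Proof.
move=> m_le; have -> : m = gamma * (m / gamma) by rewrite mulrCA divff ?gt_eqF ?mulr1.
rewrite EFinM; apply: lee_wpmul2l; first by rewrite lee_fin ltW.
apply/ereal_infP => _ [y _ <-].
move: (m_le y); case: (g y) => [Gy| |] /=; last 2 first.
- by rewrite leey.
- by rewrite mulrNy gtr0_sg // mul1e addeNy leeNy_eq.
rewrite -EFinM -!EFinD !lee_fin ler_pdivrMr // => le_m.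
suff -> : (Gy + (2 * gamma)^-1 * dotv (y - u) (y - u)) * gamma =
          2^-1 * dotv (y - u) (y - u) + gamma * Gy by [].
by field; rewrite gt_eqF.
Qed.

Lemma moreau_env_fin_num u : moreau_env gamma g u \is a fin_num.
Proof.
have [gNy [x0 gx0_fin]] := g_proper.
have gx0 : g x0 = (fine (g x0))%:E by rewrite fineK // fin_numE gNy.
set G0 := fine (g x0) in gx0.
have [r r_gt0 g_ge] := convex_lsc_minorant g_convex g_lsc gx0.
set k := gamma / r; have k_ge0 : 0 <= k by rewrite divr_ge0 ?ltW.
have env_ge : ((gamma * (G0 - 1) - k * `|u - x0| - k ^+ 2 / 2)%:E <=
               gamma%:E * moreau_env gamma g u)%E.
  apply: moreau_env_ge => // y; move: (g_ge y).
  case: (g y) => [Gy| |]; last 2 first.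
  - by move=> _; rewrite mulry gtr0_sg // mul1e addey // leey.
  - by rewrite leeNy_eq.
  rewrite -EFinM -EFinD !lee_fin => Gy_ge.
  have gGy_ge : gamma * (G0 - 1) - k * `|y - x0| <= gamma * Gy.
    by rewrite /k mulrAC -mulrA -mulrBr ler_pM2l.
  have tri : k * `|y - x0| <= k * (`|y - u| + `|u - x0|).
    by rewrite ler_wpM2l // ler_distD.
  have := sqr_normr_le_dotv (y - u); have := sqr_ge0 (`|y - u| - k).
  rewrite !expr2; nra.
rewrite fin_numE; apply/andP; split.
  by apply: contraTN env_ge => /eqP ->; rewrite mulrNy gtr0_sg // mul1e leeNy_eq.
rewrite -ltey; apply: le_lt_trans (ereal_inf_lbound _) _.
  by exists x0.
by rewrite gx0 ltey.
Qed.

End MoreauEnvelope.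

Section Reformulation.
Variables (R : realType) (n : nat) (A : 'M[R]_n) (b : 'cV[R]_n).
Variables (alpha gamma : R) (g : 'cV[R]_n -> \bar R).
Hypothesis A_psd : psdmx A.
Hypothesis gamma_gt0 : 0 < gamma.
Hypothesis M_pd : pdmx (1%:M - gamma *: A).
Hypothesis g_proper : proper_fun g.
Hypothesis g_convex : convex_efun g.
Hypothesis g_lsc : lower_semicontinuous g.
Implicit Types (u x y : 'cV[R]_n).

Local Notation M := (1%:M - gamma *: A).
Local Notation Q := (invmx M).
Local Notation c := (gamma *: (Q *m b)).

Let q x := 2^-1 * dotv (A *m x) x + dotv b x.
Let phi x := ((q x + alpha)%:E + g x)%E.
Let psi u := ((2^-1 * dotv ((Q - 1%:M) *m u) u + dotv c u)%:E +
              gamma%:E * moreau_env gamma g u)%E.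
Let distM x y := dotv (M *m (x - y)) (x - y).
Let K := - (gamma / 2 * dotv c b) - gamma * alpha.

Let M_sym : M^T = M := M_pd.1.

Let mulmxQ : M *m Q = 1%:M.
Proof. exact/mulmxV/pdmx_unit. Qed.

Let mulQmx : Q *m M = 1%:M.
Proof. exact/mulVmx/pdmx_unit. Qed.

Lemma psi_identity u y :
  2^-1 * dotv ((Q - 1%:M) *m u) u + dotv c u + 2^-1 * dotv (y - u) (y - u) =
  2^-1 * distM (Q *m u + c) y + K + gamma * (q y + alpha).
Proof.
set x := Q *m u + c.
have Qu : Q *m u = x - c by rewrite addrK.
have u_eq : u = M *m x - gamma *: b.
  by rewrite mulmxDr mulmxA mulmxQ mul1mx scalemxAr mulmxA mulmxQ mul1mx addrK.
have Mc : dotv c (M *m x) = gamma * dotv b x.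
  by rewrite dotvC dotv_mulmxl M_sym scalemxAr mulmxA mulmxQ mul1mx dotvZr dotvC.
have My : dotv (M *m y) y = dotv y y - gamma * dotv (A *m y) y.
  by rewrite mulmxBl mul1mx -scalemxAl dotvBl dotvZl.
have Myx : dotv (M *m y) x = dotv (M *m x) y.
  by rewrite dotv_mulmxl M_sym dotvC.
rewrite /distM /q /K mulmxBl mul1mx Qu mulmxBr !dotvBl !dotvBr My Myx.
have xu : dotv x u = dotv (M *m x) x - gamma * dotv b x.
  by rewrite u_eq dotvBr dotvZr dotvC (dotvC x b).
have cu : dotv c u = gamma * dotv b x - gamma * dotv c b.
  by rewrite u_eq dotvBr dotvZr Mc.
have yu : dotv y u = dotv (M *m x) y - gamma * dotv b y.
  by rewrite u_eq dotvBr dotvZr dotvC (dotvC y b).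
by rewrite xu cu (dotvC u y) yu; field.
Qed.

Lemma psi_term_eq u y :
  ((2^-1 * dotv ((Q - 1%:M) *m u) u + dotv c u)%:E +
   ((2^-1 * dotv (y - u) (y - u))%:E + gamma%:E * g y) =
   (2^-1 * distM (Q *m u + c) y + K)%:E + gamma%:E * phi y)%E.
Proof.
rewrite /phi muleDr ?fin_num_adde_defr // !addeA -!EFinM -!EFinD.
by rewrite psi_identity.
Qed.

Lemma psi_le u y :
  (psi u <= (2^-1 * distM (Q *m u + c) y + K)%:E + gamma%:E * phi y)%E.
Proof. by rewrite -psi_term_eq leeD2l // moreau_env_le. Qed.

Lemma psi_ge u (m : R) :
  (forall y, (m%:E <= (2^-1 * distM (Q *m u + c) y + K)%:E + gamma%:E * phi y)%E) ->
  (m%:E <= psi u)%E.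
Proof.
move=> m_le; set L := 2^-1 * dotv ((Q - 1%:M) *m u) u + dotv c u.
have env_ge : ((m - L)%:E <= gamma%:E * moreau_env gamma g u)%E.
  apply: moreau_env_ge => // y.
  by rewrite -(@leeD2lE _ L%:E) // -EFinD subrKC psi_term_eq.
by have := leeD2l L%:E env_ge; rewrite -EFinD subrKC.
Qed.

Let distM_ge0 x y : 0 <= distM x y.
Proof. exact: (pdmx_psd M_pd).2. Qed.

Lemma affine_invK x : Q *m (M *m (x - c)) + c = x.
Proof. by rewrite mulmxA mulQmx mul1mx subrK. Qed.

Lemma psi_le_phi y : (psi (M *m (y - c)) <= K%:E + gamma%:E * phi y)%E.
Proof.
apply: le_trans (psi_le _ y) _.
by rewrite affine_invK /distM subrr mulmx0 dotv0l mulr0 add0r.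
Qed.

Let phi_neqNy x : phi x != -oo%E.
Proof. by rewrite /phi adde_eq_ninfty negb_or g_proper.1. Qed.

Lemma phi_fin_num_at_min x : is_minimizer phi x -> phi x \is a fin_num.
Proof.
have [_ [x0 gx0]] := g_proper; move=> /(_ x0) phi_le.
rewrite fin_numE phi_neqNy -ltey; apply: le_lt_trans phi_le _.
by rewrite /phi lte_add_pinfty ?ltey.
Qed.

Lemma minimizer_phi_psi x : is_minimizer phi x -> is_minimizer psi (M *m (x - c)).
Proof.
move=> x_min u; apply: le_trans (psi_le_phi x) _.
rewrite -(fineK (phi_fin_num_at_min x_min)) -EFinM -EFinD.
apply: psi_ge => y; apply: (@le_trans _ _ (K%:E + gamma%:E * phi y)%E).
  rewrite EFinD EFinM fineK ?phi_fin_num_at_min //.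
  by apply/leeD2l/lee_wpmul2l; [rewrite lee_fin ltW | exact: x_min].
by apply: leeD2r; rewrite lee_fin lerDr mulr_ge0 ?distM_ge0.
Qed.

(* phi stays above the tangent plane of q at x, so lower semicontinuity of g
   carries over to phi on a small enough ball. *)
Lemma phi_lsc x (a : R) : (a%:E < phi x)%E ->
  exists2 V, nbhs x V & forall y, V y -> (a%:E < phi y)%E.
Proof.
move=> a_lt.
have g_gt : ((a - (q x + alpha))%:E < g x)%E by rewrite EFinB lteBlDl.
have [t t_gt t_lt] := ltEFin_between g_gt.
have [V V_nbhs g_gtV] := g_lsc t_lt.
set N := \sum_i `|(A *m x + b) i 0|.
have N_ge0 : 0 <= N by apply: sumr_ge0.
set rho := (t - (a - (q x + alpha))) / (N + 1).
have rho_gt0 : 0 < rho by apply: divr_gt0; lra.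
have N_rho : N * rho < t - (a - (q x + alpha)).
  by rewrite /rho mulrA ltr_pdivrMr; nra.
exists (V `&` ball x rho); first by apply: filterI => //; exact: nbhsx_ballx.
move=> y [/g_gtV g_y]; rewrite -ball_normE /= distrC => xy_lt.
have q_ge : q x - N * rho <= q y.
  have := psd_quad_tangent_le b x y A_psd.
  have := normr_dotv_le (A *m x + b) (y - x); rewrite -/N ler_norml => /andP[lo _].
  have : N * `|y - x| <= N * rho by rewrite ler_wpM2l // ltW.
  rewrite /q => N_le tangent; lra.
move: g_y; rewrite /phi; case: (g y) => [Gy| |] //; last by move=> _; rewrite addey // ltey.
by rewrite -EFinD !lte_fin => t_lt_Gy; lra.
Qed.

(* Near Q u + c, phi exceeds a; far from it, the M-distance term exceeds r^2 / S. *)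
Lemma psi_ge_split u (a r S Psi : R) : 0 < r -> 0 < S ->
  (forall z, `|z| ^+ 2 <= S * dotv (M *m z) z) ->
  ball (Q *m u + c) r `<=` [set y | (a%:E < phi y)%E] ->
  (forall y, (Psi%:E <= K%:E + gamma%:E * phi y)%E) ->
  ((Num.min (gamma * a + K) (Psi + 2^-1 * r ^+ 2 / S))%:E <= psi u)%E.
Proof.
move=> r_gt0 S_gt0 M_bound ball_gt Psi_le; apply: psi_ge => y.
set x := Q *m u + c; have [xy_lt|xy_ge] := ltrP `|x - y| r.
  have phi_y : (a%:E < phi y)%E by apply: ball_gt; rewrite -ball_normE.
  apply: (@le_trans _ _ (K%:E + gamma%:E * phi y)%E).
    apply: (@le_trans _ _ (gamma * a + K)%:E); first by rewrite lee_fin ge_min lexx.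
    rewrite addrC EFinD EFinM; apply/leeD2l/lee_wpmul2l; first by rewrite lee_fin ltW.
    exact: ltW.
  by apply: leeD2r; rewrite lee_fin lerDr mulr_ge0 ?distM_ge0.
have r2_le : 2^-1 * r ^+ 2 / S <= 2^-1 * distM x y.
  rewrite -mulrA ler_pM2l // ler_pdivrMr // mulrC.
  apply: le_trans (M_bound (x - y)); rewrite !expr2; nra.
apply: (@le_trans _ _ ((2^-1 * distM x y)%:E + Psi%:E)%E).
  by rewrite -EFinD lee_fin ge_min; apply/orP; right; rewrite [leRHS]addrC lerD2l.
by rewrite EFinD -addeA; apply: leeD2l.
Qed.

Lemma minimizer_psi_phi u : is_minimizer psi u -> is_minimizer phi (Q *m u + c).
Proof.
move=> u_min x1; rewrite leNgt; apply/negP => phi_lt.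
have psi_fin : psi u \is a fin_num by rewrite fin_numD fin_numM ?moreau_env_fin_num.
set Psi := fine (psi u); have psiE : psi u = Psi%:E by rewrite fineK.
have Psi_le y : (Psi%:E <= K%:E + gamma%:E * phi y)%E.
  by rewrite -psiE; exact: le_trans (u_min _) (psi_le_phi y).
have phi1_fin : phi x1 \is a fin_num.
  by rewrite fin_numE phi_neqNy -ltey (lt_le_trans phi_lt (leey _)).
move: phi_lt (Psi_le x1); rewrite -(fineK phi1_fin) -EFinM -EFinD lee_fin.
set F1 := fine (phi x1) => /ltEFin_between [a F1_lt a_lt] Psi_le1.
have [V /nbhs_ballP [r /= r_gt0 ballV] phi_gtV] := phi_lsc a_lt.
have [S S_gt0 M_bound] := pdmx_sqr_normr_le M_pd.
have := psi_ge_split r_gt0 S_gt0 M_bound (fun y xy => phi_gtV y (ballV y xy)) Psi_le.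
rewrite psiE lee_fin ge_min => /orP [].
  have : gamma * F1 < gamma * a by rewrite ltr_pM2l.
  lra.
by rewrite gerDl leNgt !mulr_gt0 ?invr_gt0 ?exprn_gt0.
Qed.

End Reformulation.

Theorem lemma5p8 (R : realType) (n : nat) (A : 'M[R]_n) (b : 'cV[R]_n) (alpha : R)
  (g : 'cV[R]_n -> \bar R) (gamma : R) :
  psdmx A ->
  proper_fun g -> lower_semicontinuous g -> convex_efun g ->
  0 < gamma ->
  pdmx (1%:M - gamma *: A) ->
  let Q := invmx (1%:M - gamma *: A) in
  let c := gamma *: (Q *m b) in
  let P := Q - 1%:M in
  let psi := fun u : 'cV[R]_n =>
    ((2^-1 * dotv (P *m u) u + dotv c u)%:E + gamma%:E * moreau_env gamma g u)%E in
  let phi := fun x : 'cV[R]_n =>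
    ((2^-1 * dotv (A *m x) x + dotv b x + alpha)%:E + g x)%E in
  forall xbar : 'cV[R]_n,
    is_minimizer phi xbar <->
    exists2 ubar : 'cV[R]_n, is_minimizer psi ubar & xbar = Q *m ubar + c.
Proof.
move=> A_psd g_proper g_lsc g_convex gamma_gt0 M_pd Q c P psi phi xbar; split.
  move=> xbar_min; exists ((1%:M - gamma *: A) *m (xbar - c)).
    exact: (minimizer_phi_psi gamma_gt0 M_pd g_proper xbar_min).
  by rewrite affine_invK.
case=> ubar ubar_min ->.
exact: (minimizer_psi_phi alpha A_psd gamma_gt0 M_pd g_proper g_convex g_lsc ubar_min).
Qed.
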